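(* Let $A\in\mathcal{PM}(n)$ have row vectors $r_0,\ldots,r_{n-1}$. A row vector $v\in\{0,1\}^n$ is a poset vector of $A$ if and only if $v=\sum_{i\in S} r_i$ (Boolean sum) for some $S\subseteq X_n$ with $|S|=k\ge 0$ such that the principal submatrix $A[S]$ equals the $k\times k$ identity matrix $I_k$, where the empty sum ($k=0$) is $v=\mathbf{0}$.
   Context: Let $X_n=\{0,1,\ldots,n-1\}$. A naturally labeled (NL) poset on $X_n$ is a partial order $\preceq$ on $X_n$ such that $x\preceq y$ implies $x\le y$ in the usual integer order. Its poset matrix is the $n\times n$ $(0,1)$-matrix $A=(a_{i,j})_{i,j\in X_n}$ with $a_{i,j}=1$ if $j\preceq i$ and $0$ otherwise; $\mathcal{PM}(n)$ is the set of all such matrices. Vectors are over the Boolean algebra $\{0,1\}$ with $0+0=0$, $0+1=1+0=1+1=1$ (entrywise sum). For $v\in\{0,1\}^n$ (a row vector), $A^v=\begin{bmatrix}A&\mathbf{0}\\ v&1\end{bmatrix}$, and $v$ is a poset vector of $A$ if $A^v\in\mathcal{PM}(n+1)$. For $S\subseteq X_n$, $A[S]$ is the principal submatrix of $A$ with rows and columns indexed by $S$. *)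

(* Matrices over the Boolean algebra {0,1} are 'M[bool]_n
   (entry true = 1, false = 0); row vectors are 'rV[bool]_n. *)
From mathcomp Require Import all_boot all_algebra.
Set Implicit Arguments. Unset Strict Implicit. Unset Printing Implicit Defensive.

(* A is a poset matrix: the relation  j ⪯ i  :=  A i j  is a partial order on
   X_n = 'I_n which is naturally labeled (j ⪯ i implies j <= i). *)
Definition is_poset_matrix (n : nat) (A : 'M[bool]_n) : Prop :=
  [/\ (forall i, A i i),
      (forall i j, A i j -> A j i -> i = j),
      (forall i j k, A i j -> A j k -> A i k)
    & (forall i j, A i j -> (j <= i)%N)].

(* A^v = [A 0; v 1] : the last index is ord_max of 'I_n.+1. *)
Definition ext_mx (n : nat) (A : 'M[bool]_n) (v : 'rV[bool]_n) : 'M[bool]_n.+1 :=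
  \matrix_(i, j)
    match unlift ord_max i, unlift ord_max j with
    | Some i', Some j' => A i' j'
    | Some _, None => false
    | None, Some j' => v ord0 j'
    | None, None => true
    end.

Definition is_poset_vector (n : nat) (A : 'M[bool]_n) (v : 'rV[bool]_n) : Prop :=
  is_poset_matrix (ext_mx A v).

Definition bool_row_sum (n : nat) (A : 'M[bool]_n) (S : {set 'I_n}) : 'rV[bool]_n :=
  \row_j \big[orb/false]_(i in S) A i j.

Definition principal_is_identity (n : nat) (A : 'M[bool]_n) (S : {set 'I_n}) : Prop :=
  forall i j, i \in S -> j \in S -> A i j = (i == j).

(* A vector v is a poset vector of A exactly when its support is a down-set of
   the poset (the new element sits above precisely the elements of v).  Row r_i
   is the principal down-set of i, so a Boolean sum of rows is the down-set
   generated by S, and A[S] = I_k says that S is an antichain.  Conversely every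
   down-set is generated by the antichain of its maximal elements, which exist
   because the labelling is natural: take the largest index above a given one. *)
From mathcomp Require Import all_boot all_algebra.

Set Implicit Arguments.
Unset Strict Implicit.
Unset Printing Implicit Defensive.

Definition down_closed (n : nat) (A : 'M[bool]_n) (v : 'rV[bool]_n) : Prop :=
  forall j k, v ord0 j -> A j k -> v ord0 k.

Definition maximal_support (n : nat) (A : 'M[bool]_n) (v : 'rV[bool]_n) :
    {set 'I_n} :=
  [set j | v ord0 j && [forall i, v ord0 i && A i j ==> (i == j)]].

Section ExtMatrix.
Variables (n : nat) (A : 'M[bool]_n) (v : 'rV[bool]_n).

Lemma ext_mx_lift i j : ext_mx A v (lift ord_max i) (lift ord_max j) = A i j.
Proof. by rewrite mxE !liftK. Qed.

Lemma ext_mx_lift_max i : ext_mx A v (lift ord_max i) ord_max = false.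
Proof. by rewrite mxE liftK unlift_none. Qed.

Lemma ext_mx_max_lift j : ext_mx A v ord_max (lift ord_max j) = v ord0 j.
Proof. by rewrite mxE liftK unlift_none. Qed.

Lemma ext_mx_max_max : ext_mx A v ord_max ord_max = true.
Proof. by rewrite mxE unlift_none. Qed.

Definition ext_mxE :=
  (ext_mx_lift, ext_mx_lift_max, ext_mx_max_lift, ext_mx_max_max).

Lemma lift_max_val (i : 'I_n) : lift ord_max i = i :> nat.
Proof. by rewrite /= /bump leqNgt ltn_ord. Qed.

Lemma poset_vectorP :
  is_poset_matrix A -> is_poset_vector A v <-> down_closed A v.
Proof.
case=> A_refl A_anti A_trans A_nat; split.
  case=> _ _ ext_trans _ j k vj Ajk.
  by have := ext_trans ord_max (lift ord_max j) (lift ord_max k); rewrite !ext_mxE; apply.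
move=> v_down; split.
- by move=> i; case: (unliftP ord_max i) => [i'|] ->; rewrite ext_mxE.
- move=> i j; case: (unliftP ord_max i) => [i'|] ->;
    case: (unliftP ord_max j) => [j'|] ->; rewrite ?ext_mxE // => Aij Aji.
  by rewrite (A_anti _ _ Aij Aji).
- move=> i j k; case: (unliftP ord_max i) => [i'|] ->;
    case: (unliftP ord_max j) => [j'|] ->;
    case: (unliftP ord_max k) => [k'|] ->; rewrite ?ext_mxE //; eauto.
- move=> i j; case: (unliftP ord_max i) => [i'|] ->;
    case: (unliftP ord_max j) => [j'|] ->;
    rewrite ?ext_mxE ?lift_max_val //; eauto.
Qed.

End ExtMatrix.

Lemma bool_row_sumE (n : nat) (A : 'M[bool]_n) (S : {set 'I_n}) k :
  bool_row_sum A S ord0 k = [exists i in S, A i k].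
Proof. by rewrite mxE big_orE. Qed.

Section DownSets.
Variables (n : nat) (A : 'M[bool]_n).
Hypothesis A_refl : forall i, A i i.
Hypothesis A_trans : forall i j k, A i j -> A j k -> A i k.
Hypothesis A_nat : forall i j, A i j -> (j <= i)%N.

Lemma bool_row_sum_down_closed (S : {set 'I_n}) : down_closed A (bool_row_sum A S).
Proof.
move=> j k; rewrite !bool_row_sumE => /exists_inP[i iS Aij] Ajk.
by apply/exists_inP; exists i; last exact: A_trans Aij Ajk.
Qed.

Lemma maximal_support_antichain (v : 'rV[bool]_n) :
  principal_is_identity A (maximal_support A v).
Proof.
move=> i j; rewrite !inE => /andP[vi _] /andP[_ /forallP j_max].
case: eqP => [-> | neq_ij]; first exact: A_refl.
by apply/negP => Aij; move: (j_max i); rewrite vi Aij => /eqP.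
Qed.

Lemma exists_maximal_above (v : 'rV[bool]_n) k :
  down_closed A v -> v ord0 k -> [exists i in maximal_support A v, A i k].
Proof.
move=> v_down vk; have vkk : v ord0 k && A k k by rewrite vk A_refl.
case: (@arg_maxnP _ k (fun i => v ord0 i && A i k) val vkk) => i /andP[vi Aik] i_largest.
apply/exists_inP; exists i => //; rewrite inE vi /=.
apply/forallP => i'; apply/implyP => /andP[vi' Ai'i].
have /i_largest le_i'_i : v ord0 i' && A i' k by rewrite vi' (A_trans Ai'i Aik).
by apply/eqP/val_inj/eqP; rewrite eqn_leq (A_nat Ai'i) andbT; exact: le_i'_i.
Qed.

Lemma down_closed_row_sum (v : 'rV[bool]_n) :
  down_closed A v -> v = bool_row_sum A (maximal_support A v).
Proof.
move=> v_down; apply/rowP => k; rewrite bool_row_sumE.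
apply/idP/idP; first exact: exists_maximal_above.
by case/exists_inP => i; rewrite inE => /andP[vi _]; apply: v_down.
Qed.

End DownSets.

Theorem theorem2p2 (n : nat) (A : 'M[bool]_n) (v : 'rV[bool]_n) :
  is_poset_matrix A ->
  (is_poset_vector A v <->
   exists S : {set 'I_n}, principal_is_identity A S /\ v = bool_row_sum A S).
Proof.
move=> A_poset; apply: iff_trans (poset_vectorP v A_poset) _.
case: A_poset => A_refl _ A_trans A_nat; split.
  move=> v_down; exists (maximal_support A v); split.
    exact: maximal_support_antichain.
  exact: down_closed_row_sum.
by case=> S [_ ->]; apply: bool_row_sum_down_closed.
Qed.
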